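(* Let $R$ be a local ring and $R\subset S$ a flat ring extension. Then $\widetilde R=R_{[\Delta(R)]}=R_\Sigma$, where $\Sigma:=\Delta(R)\cap\mathrm U(S)$ and $\widetilde R$ is the Prüfer hull of $R$ in $S$.
   Context: All rings are commutative with identity; ''local'' means having a unique maximal ideal (no Noetherian hypothesis). A strong divisor of a local ring $R$ is a regular element (non-zero-divisor) $t\in R$ such that the ideal $Rt$ is comparable under inclusion with every ideal of $R$; $\Delta(R)$ denotes the set of strong divisors of $R$ (a saturated multiplicatively closed subset containing the units). $\mathrm U(S)$ is the group of units of $S$. An extension $A\subseteq B$ is Prüfer if $A\subseteq C$ is a flat epimorphism for every $R$-subalgebra $C$ of $B$ containing $A$. The Prüfer hull $\widetilde R$ of $R$ in $S$ is the largest $T\in[R,S]$ such that $R\subseteq T$ is Prüfer. For a multiplicatively closed subset $\Delta$ of $R$, the large quotient ring $R_{[\Delta]}$ (in $S$) is the set of $x\in S$ such that $sx\in R$ for some $s\in\Delta$. $R_\Sigma$ is the localization, which embeds in $S$ since $\Sigma\subseteq\mathrm U(S)$. *)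

From HB Require Import structures.
From mathcomp Require Import all_boot all_order all_algebra.
Set Implicit Arguments. Unset Strict Implicit. Unset Printing Implicit Defensive.
Import GRing.Theory.
Local Open Scope ring_scope.

(* Convention: a fixed commutative ring S; subrings of S (R, and the
   elements T of [R,S]) are represented as Prop-valued predicates on S. *)

Section Defs.
Variable S : comPzRingType.

Definition subset (A B : S -> Prop) := forall x, A x -> B x.
Definition same_set (A B : S -> Prop) := forall x, A x <-> B x.

Definition is_subring (A : S -> Prop) :=
  [/\ A 0, A 1, (forall x y, A x -> A y -> A (x - y)),
      (forall x y, A x -> A y -> A (x + y)) & (forall x y, A x -> A y -> A (x * y))].

Definition is_ideal (R I : S -> Prop) :=
  [/\ subset I R, I 0, (forall x y, I x -> I y -> I (x + y))
    & (forall r x, R r -> I x -> I (r * x))].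

Definition is_maximal_ideal (R I : S -> Prop) :=
  [/\ is_ideal R I, ~ I 1 &
      (forall J, is_ideal R J -> ~ J 1 -> subset I J -> same_set I J)].

Definition is_local (R : S -> Prop) :=
  exists M, is_maximal_ideal R M /\
    forall N, is_maximal_ideal R N -> same_set N M.

Definition regular (R : S -> Prop) (t : S) :=
  R t /\ forall x, R x -> t * x = 0 -> x = 0.

Definition principal (R : S -> Prop) (t : S) : S -> Prop :=
  fun x => exists r, R r /\ x = r * t.

Definition strong_divisor (R : S -> Prop) (t : S) :=
  regular R t /\
  forall I, is_ideal R I -> subset (principal R t) I \/ subset I (principal R t).

Definition unitS (s : S) := exists u, s * u = 1.

Definition large_quotient (R D : S -> Prop) : S -> Prop :=
  fun x => exists s, D s /\ R (s * x).

(* image in S of the localization R_Sigma (Sigma consists of units of S) *)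
Definition localization_in (R Sigma : S -> Prop) : S -> Prop :=
  fun x => exists r s u, [/\ R r, Sigma s, s * u = 1 & x = r * u].

(* flatness of the extension A ⊆ C (C an A-module), via the equational
   criterion of flatness *)
Definition is_flat (A C : S -> Prop) :=
  forall (n : nat) (a x : 'I_n -> S),
    (forall i, A (a i)) -> (forall i, C (x i)) ->
    \sum_(i < n) a i * x i = 0 ->
    exists (m : nat) (y : 'I_m -> S) (c : 'I_n -> 'I_m -> S),
      [/\ (forall k, C (y k)), (forall i k, A (c i k)),
          (forall i, x i = \sum_(k < m) c i k * y k) &
          (forall k, \sum_(i < n) a i * c i k = 0)].

Definition morph_on (C : S -> Prop) (T : comPzRingType) (f : S -> T) :=
  [/\ f 1 = 1, (forall x y, C x -> C y -> f (x + y) = f x + f y)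
    & (forall x y, C x -> C y -> f (x * y) = f x * f y)].

Definition is_epi (A C : S -> Prop) :=
  forall (T : comPzRingType) (f g : S -> T),
    morph_on C f -> morph_on C g -> (forall a, A a -> f a = g a) ->
    forall c, C c -> f c = g c.

Definition flat_epi (A C : S -> Prop) := is_flat A C /\ is_epi A C.

Definition is_Prufer (A B : S -> Prop) :=
  forall C, is_subring C -> subset A C -> subset C B -> flat_epi A C.

Definition is_Prufer_hull (R H : S -> Prop) :=
  [/\ is_subring H, subset R H, is_Prufer R H &
      forall T, is_subring T -> subset R T -> is_Prufer R T -> subset T H].

End Defs.

From Pilot Require Import Defs.
From HB Require Import structures.
From mathcomp Require Import all_boot all_order all_algebra.
From mathcomp Require Import ring_quotient.
From mathcomp Require Import boolp.
From mathcomp Require classical_sets.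
From Stdlib Require Import Classical.
From mathcomp Require Import ring.
Set Implicit Arguments. Unset Strict Implicit. Unset Printing Implicit Defensive.
Import GRing.Theory.
Local Open Scope ring_scope.

(* Since S is flat over R, regular elements of R stay non-zero-divisors in S.
   Hence, for x in R_[Δ] with s x ∈ R, comparing the ideals R s and R s x shows
   that either x ∈ R or a x = 1 for some a ∈ R, and such an a is then itself a
   strong divisor.  This dichotomy makes every ring between R and R_[Δ] a
   localization of R, hence a flat epimorphic extension, and it gives
   R_[Δ] = R_Σ.

   Conversely, let R ⊆ T be Prüfer and y ∈ T.  Then R ⊆ R[y] is a flat
   epimorphism, so 1 ⊗ y = y ⊗ 1 in R[y] ⊗_R R[y], and flatness turns this
   into the statement that the conductor (R :_R y) generates R[y].  As R is
   local, either y ∈ R or M R[y] = R[y]; in the latter case y has an inverse z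
   in R[y], and since M R[y] and M R[z] cannot both be the unit ideal, z ∈ R.
   So T satisfies the same dichotomy and lies in R_[Δ]. *)

Section SubringIdeal.
Variable S : comPzRingType.
Implicit Types A I : S -> Prop.

Lemma subring0 A : is_subring A -> A 0. Proof. by case. Qed.
Lemma subring1 A : is_subring A -> A 1. Proof. by case. Qed.
Lemma subringB A x y : is_subring A -> A x -> A y -> A (x - y).
Proof. by case=> _ _ h _ _; exact: h. Qed.
Lemma subringD A x y : is_subring A -> A x -> A y -> A (x + y).
Proof. by case=> _ _ _ h _; exact: h. Qed.
Lemma subringM A x y : is_subring A -> A x -> A y -> A (x * y).
Proof. by case=> _ _ _ _ h; exact: h. Qed.

Lemma subringN A x : is_subring A -> A x -> A (- x).
Proof. by move=> hA hx; rewrite -sub0r; apply: subringB hA (subring0 hA) hx. Qed.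

Lemma subring_sum A (J : Type) (r : seq J) (P : pred J) (F : J -> S) :
  is_subring A -> (forall j, P j -> A (F j)) -> A (\sum_(j <- r | P j) F j).
Proof.
by move=> hA hF; apply: (big_ind A) => // [|x y]; [exact: subring0 | exact: subringD].
Qed.

Lemma subring_exp A x n : is_subring A -> A x -> A (x ^+ n).
Proof.
move=> hA hx; elim: n => [|n IHn]; first by rewrite expr0; exact: subring1.
by rewrite exprS; exact: subringM.
Qed.

Lemma subring_bool A (b : bool) : is_subring A -> A b%:R.
Proof. by case: b => hA; [exact: subring1 | exact: subring0]. Qed.

Variable R : S -> Prop.

Lemma ideal_sub I x : is_ideal R I -> I x -> R x.
Proof. by case=> h _ _ _; exact: h. Qed.
Lemma ideal0 I : is_ideal R I -> I 0. Proof. by case. Qed.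
Lemma idealD I x y : is_ideal R I -> I x -> I y -> I (x + y).
Proof. by case=> _ _ h _; exact: h. Qed.
Lemma ideal_mull I r x : is_ideal R I -> R r -> I x -> I (r * x).
Proof. by case=> _ _ _ h; exact: h. Qed.
Lemma ideal_mulr I r x : is_ideal R I -> R r -> I x -> I (x * r).
Proof. by rewrite mulrC; exact: ideal_mull. Qed.

Lemma ideal_sum I (J : Type) (r : seq J) (P : pred J) (F : J -> S) :
  is_ideal R I -> (forall j, P j -> I (F j)) -> I (\sum_(j <- r | P j) F j).
Proof.
by move=> hI hF; apply: (big_ind I) => // [|x y]; [exact: ideal0 | exact: idealD].
Qed.

Lemma principal_is_ideal t : is_subring R -> R t -> is_ideal R (principal R t).
Proof.
move=> hR ht; split.
- by move=> _ [a [ha ->]]; exact: subringM.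
- by exists 0; split; [exact: subring0 | rewrite mul0r].
- move=> _ _ [a [ha ->]] [b [hb ->]].
  by exists (a + b); split; [exact: subringD | rewrite mulrDl].
- move=> c _ hc [a [ha ->]].
  by exists (c * a); split; [exact: subringM | rewrite mulrA].
Qed.

Lemma proper_ideal_oner_neq0 I : is_ideal R I -> ~ I 1 -> (1 : S) != 0.
Proof. by move=> hI hI1; apply/eqP => e; apply: hI1; rewrite e; exact: ideal0. Qed.

(* Zorn's lemma is applied to the proper ideals containing [I] together with
   the empty set, which serves as the union of the empty chain. *)
Lemma proper_ideal_sub_maximal I : is_ideal R I -> ~ I 1 ->
  exists2 N, is_maximal_ideal R N & Defs.subset I N.
Proof.
move=> hI hI1.
pose P J := J = classical_sets.set0 \/ [/\ is_ideal R J, ~ J 1 & Defs.subset I J].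
have PP J t : P J -> J t -> [/\ is_ideal R J, ~ J 1 & Defs.subset I J].
  by case=> [->|].
have [A [PA Amax]] :
    exists A, P A /\ forall B, classical_sets.proper A B -> ~ P B.
  apply: classical_sets.Zorn_bigcup => F FP Ftot.
  have [[X0 FX0 [t0 X0t0]]|Fempty] := classic (exists2 X, F X & exists t, X t);
    last first.
    left; apply/funext => t; apply/propext; split => // -[X FX Xt].
    by apply: Fempty; exists X => //; exists t.
  have [X0id _ IX0] := PP _ _ (FP _ FX0) X0t0.
  right; split; last 2 first.
  - by move=> [X FX X1]; have [_ + _] := PP _ _ (FP _ FX) X1.
  - by move=> t It; exists X0 => //; exact: IX0.
  split.
  - move=> t [X FX Xt]; have [Xid _ _] := PP _ _ (FP _ FX) Xt.
    exact: ideal_sub Xid Xt.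
  - by exists X0 => //; exact: ideal0 X0id.
  - move=> a b [X FX Xa] [Y FY Yb].
    have [Xid _ _] := PP _ _ (FP _ FX) Xa; have [Yid _ _] := PP _ _ (FP _ FY) Yb.
    have [XY|YX] := Ftot _ _ FX FY.
      by exists Y => //; exact: idealD Yid (XY _ Xa) Yb.
    by exists X => //; exact: idealD Xid Xa (YX _ Yb).
  - move=> r a hr [X FX Xa]; have [Xid _ _] := PP _ _ (FP _ FX) Xa.
    by exists X => //; exact: ideal_mull Xid hr Xa.
have PI : P I by right; split => // t.
case: PA => [A0|[Aid A1 IA]].
  by exfalso; apply: (Amax I) PI; rewrite A0; split => [t []|/(_ 0 (ideal0 hI)) []].
exists A => //; split => // J Jid J1 AJ.
have [JA|JnA] := classic (Defs.subset J A).
  by move=> t; split; [exact: AJ | exact: JA].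
by case: (Amax J); [split | right; split => // t /IA /AJ].
Qed.

End SubringIdeal.

Section LocalRing.
Variable S : comPzRingType.
Variables R M : S -> Prop.
Hypothesis HR : is_subring R.
Hypothesis HM : is_maximal_ideal R M.
Hypothesis M_unique : forall N, is_maximal_ideal R N -> same_set N M.

Lemma maximal_is_ideal : is_ideal R M. Proof. by case: HM. Qed.
Lemma maximal_not1 : ~ M 1. Proof. by case: HM. Qed.

Lemma local_unit c : R c -> ~ M c -> exists2 c', R c' & c * c' = 1.
Proof.
move=> hc hMc; apply: NNPP => hnu.
have hc1 : ~ principal R c 1.
  by move=> [r [hr r1]]; apply: hnu; exists r => //; rewrite r1 mulrC.
have [N hN hcN] := proper_ideal_sub_maximal (principal_is_ideal HR hc) hc1.
apply/hMc/(M_unique hN)/hcN.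
by exists 1; split; [exact: subring1 | rewrite mul1r].
Qed.

Lemma local_unit_one_sub m : M m -> exists2 w, R w & (1 - m) * w = 1.
Proof.
move=> hm; have hmR := ideal_sub maximal_is_ideal hm.
apply: local_unit; first exact: subringB (subring1 HR) hmR.
move=> h; apply: maximal_not1; rewrite -(subrK m 1).
exact: idealD maximal_is_ideal h hm.
Qed.

End LocalRing.

Section LargeQuotient.
Variable S : comPzRingType.
Variable R : S -> Prop.
Hypothesis HR : is_subring R.
Local Notation D := (strong_divisor R).
Local Notation H := (large_quotient R (strong_divisor R)).

Definition inv_dichotomy (T : S -> Prop) :=
  forall y, T y -> R y \/ exists2 a, R a & a * y = 1.

Lemma strong_divisor1 : D 1.
Proof.
split; first by split; [exact: subring1 | move=> y _; rewrite mul1r].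
move=> I hI; right => y hy.
by exists y; split; [exact: ideal_sub hI hy | rewrite mulr1].
Qed.

Lemma strong_divisorM s t : D s -> D t -> D (s * t).
Proof.
move=> [[hs rs] cs] [[ht rt] ct]; split.
  split; first exact: subringM.
  move=> y hy; rewrite -mulrA => /rs h; apply: rt => //.
  by apply: h; exact: subringM.
move=> I hI; have [sI|Is] := cs I hI.
  left => _ [r [hr ->]]; apply: sI; exists (r * t); split; first exact: subringM.
  by rewrite mulrA mulrAC.
(* Now [I ⊆ R s]: compare [R t] with the ideal [(I :_R s)]. *)
pose J y := R y /\ I (y * s).
have hJ : is_ideal R J.
  split.
  - by move=> y [].
  - by split; [exact: subring0 | rewrite mul0r; exact: ideal0 hI].
  - move=> a b [ha Ia] [hb Ib].
    by split; [exact: subringD | rewrite mulrDl; exact: idealD hI Ia Ib].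
  - move=> r a hr [ha Ia].
    by split; [exact: subringM | rewrite -mulrA; exact: ideal_mull hI hr Ia].
have [tJ|Jt] := ct J hJ.
  have [_ Its] : J t by apply: tJ; exists 1; split; [exact: subring1 | rewrite mul1r].
  by left => _ [r [hr ->]]; rewrite [s * t]mulrC; exact: ideal_mull hI hr Its.
right => z hz; have [y [hy zE]] := Is z hz.
have [r [hr yE]] : principal R t y by apply: Jt; split => //; rewrite -zE.
by exists r; split => //; rewrite zE yE mulrA mulrAC.
Qed.

Lemma large_quotient_subring : is_subring H.
Proof.
have H_closed (op : S -> S -> S) :
    (forall s t x y, s * t * op x y = op (t * (s * x)) (s * (t * y))) ->
    (forall a b, R a -> R b -> R (op a b)) -> forall x y, H x -> H y -> H (op x y).
  move=> opE opR x y [s [hs hsx]] [t [ht hty]].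
  exists (s * t); split; first exact: strong_divisorM.
  have [[sR _] _] := hs; have [[tR _] _] := ht.
  by rewrite opE; apply: opR; exact: subringM.
split.
- by exists 1; split; [exact: strong_divisor1 | rewrite mulr0; exact: subring0].
- by exists 1; split; [exact: strong_divisor1 | rewrite mulr1; exact: subring1].
- by apply: H_closed => [s t x y|a b]; [ring | exact: subringB].
- by apply: H_closed => [s t x y|a b]; [ring | exact: subringD].
- move=> x y [s [hs hsx]] [t [ht hty]].
  exists (s * t); split; first exact: strong_divisorM.
  by rewrite mulrACA; exact: subringM.
Qed.

Lemma sub_large_quotient : Defs.subset R H.
Proof. by move=> x hx; exists 1; split; [exact: strong_divisor1 | rewrite mul1r]. Qed.

Lemma dichotomy_strong_divisor T y a : is_subring T -> Defs.subset R T ->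
  inv_dichotomy T -> T y -> R a -> a * y = 1 -> D a.
Proof.
move=> hT RT hV hy ha hay; split.
  by split=> // r hr har; rewrite -[r]mul1r -hay mulrAC har mul0r.
move=> I hI; have [|nIa] := classic (Defs.subset I (principal R a)); first by right.
have [z hz hza] : exists2 z, I z & ~ principal R a z.
  by apply: NNPP => hn; apply: nIa => z hz; apply: NNPP => hza; apply: hn; exists z.
left; have hzR : R z := ideal_sub hI hz.
have [hzy|[w hw hwzy]] := hV (z * y) (subringM hT (RT _ hzR) hy).
  by case: hza; exists (z * y); split; rewrite // -mulrA [y * a]mulrC hay mulr1.
(* [a = (w z y) a = w z (a y) = w z] *)
move=> _ [r [hr ->]].
have -> : a = w * z by rewrite -[a]mulr1 -hwzy -[w * z]mulr1 -hay; ring.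
by rewrite mulrA; apply: ideal_mull hI _ hz; exact: subringM.
Qed.

Lemma dichotomy_sub_large_quotient T : is_subring T -> Defs.subset R T ->
  inv_dichotomy T -> Defs.subset T H.
Proof.
move=> hT RT hV y hy; have [|[a ha hay]] := hV y hy; first exact: sub_large_quotient.
exists a; split; first exact: dichotomy_strong_divisor hT RT hV hy ha hay.
by rewrite hay; exact: subring1.
Qed.

Lemma dichotomy_common_denominator C (l : seq S) : is_subring C -> Defs.subset R C ->
  inv_dichotomy C -> (forall y, y \in l -> C y) ->
  exists d u, [/\ R d, C u, d * u = 1 & forall y, y \in l -> R (d * y)].
Proof.
move=> hC RC hV; elim: l => [|y l IHl] hl.
  by exists 1, 1; split; rewrite ?mulr1 //; exact: subring1.
have [|d [u [hd hu hdu hdl]]] := IHl.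
  by move=> z hz; apply: hl; rewrite inE hz orbT.
have hy : C y by apply: hl; rewrite inE eqxx.
have [hyR|[a ha hay]] := hV y hy.
  exists d, u; split => // z; rewrite inE => /orP[/eqP ->|/hdl //].
  exact: subringM.
exists (a * d), (y * u); split; [exact: subringM | exact: subringM |
  by rewrite mulrACA hay hdu mulr1 |].
move=> z; rewrite inE => /orP[/eqP ->|hz]; first by rewrite mulrAC hay mul1r.
by rewrite -mulrA; apply: subringM => //; exact: hdl.
Qed.

(* Every finite family in [C] has a common denominator that is a unit of [C],
   which makes [C] a localization of [R]: flat, and epimorphic because the
   elements of [C] outside [R] are inverses of elements of [R]. *)
Lemma dichotomy_flat_epi C : is_subring C -> Defs.subset R C -> inv_dichotomy C ->
  flat_epi R C.
Proof.
move=> hC RC hV; split.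
  move=> n a xs ha hx hsum.
  have [|d [u [hd hu hdu hdl]]] :=
      dichotomy_common_denominator (l := [seq xs i | i <- enum 'I_n]) hC RC hV.
    by move=> y /mapP[i _ ->].
  exists 1, (fun _ => u), (fun i _ => d * xs i); split => //.
  - by move=> i _; apply: hdl; apply: map_f; rewrite mem_enum.
  - by move=> i; rewrite big_ord1 mulrAC hdu mul1r.
  - move=> _; rewrite (eq_bigr (fun i => d * (a i * xs i))) => [|i _]; last by ring.
    by rewrite -mulr_sumr hsum mulr0.
move=> T f g [f1 fD fM] [g1 gD gM] hfg c hc.
have [|[a ha hac]] := hV c hc; first exact: hfg.
have hfa : f a * f c = 1 by rewrite -fM ?hac //; exact: RC.
have hga : g a * g c = 1 by rewrite -gM ?hac //; exact: RC.
by rewrite -[f c]mulr1 -hga mulrA [f c * _]mulrC -(hfg _ ha) hfa mul1r.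
Qed.

Section Flat.
Hypothesis HS_flat : is_flat R (fun _ => True).

Lemma flat_regular_mul_eq0 s y : regular R s -> s * y = 0 -> y = 0.
Proof.
move=> [hs sreg] hsy.
have [|//||m [z [c [_ hc hy hcs]]]] := @HS_flat 1 (fun _ => s) (fun _ => y).
- by [].
- by rewrite big_ord1.
rewrite (hy ord0) big1 // => k _.
by have := hcs k; rewrite big_ord1 => /sreg ->; rewrite ?mul0r.
Qed.

Lemma large_quotient_dichotomy : inv_dichotomy H.
Proof.
move=> x [s [[[hs sreg] sdiv] hsx]].
have s_nzd := flat_regular_mul_eq0 (conj hs sreg).
have [sI|Is] := sdiv _ (principal_is_ideal HR hsx).
  have [a [ha hsa]] : principal R (s * x) s.
    by apply: sI; exists 1; split; [exact: subring1 | rewrite mul1r].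
  right; exists a => //; apply/eqP; rewrite eq_sym -subr_eq0; apply/eqP/s_nzd.
  by rewrite mulrBr mulr1 {1}hsa; ring.
have [c [hc hsxc]] : principal R s (s * x).
  by apply: Is; exists 1; split; [exact: subring1 | rewrite mul1r].
left; have /eqP : x - c = 0 by apply: s_nzd; rewrite mulrBr hsxc; ring.
by rewrite subr_eq0 => /eqP ->.
Qed.

Lemma large_quotient_Prufer : is_Prufer R H.
Proof.
move=> C hC RC CH; apply: dichotomy_flat_epi => // y hy.
exact: large_quotient_dichotomy (CH y hy).
Qed.

Lemma large_quotient_localization :
  same_set H (localization_in R (fun s => D s /\ unitS s)).
Proof.
move=> x; split => [hx|[r [s [u [hr [hs _] hsu ->]]]]]; last first.
  by exists s; split; rewrite // mulrCA hsu mulr1.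
have [hxR|[a ha hax]] := large_quotient_dichotomy hx.
  exists x, 1, 1; rewrite !mulr1; split => //.
  by split; [exact: strong_divisor1 | exists 1; rewrite mulr1].
have hD : D a := dichotomy_strong_divisor large_quotient_subring sub_large_quotient
  large_quotient_dichotomy hx ha hax.
exists 1, a, x; rewrite mul1r; split => //; first exact: subring1.
by split => //; exists x.
Qed.

End Flat.
End LargeQuotient.

Section FlatSystem.
Variable S : comPzRingType.
Variables A C : S -> Prop.
Hypothesis HA : is_subring A.
Hypothesis HAC_flat : is_flat A C.

Lemma sum_mul_sumA (I J : finType) (a : I -> S) (c : I -> J -> S) (d : J -> S) :
  \sum_i a i * (\sum_j c i j * d j) = \sum_j (\sum_i a i * c i j) * d j.
Proof.
under eq_bigr do rewrite mulr_sumr.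
rewrite exchange_big; apply: eq_bigr => j _; rewrite mulr_suml.
by apply: eq_bigr => i _; rewrite mulrA.
Qed.

(* Induction on the number of equations: solve the first one with [is_flat],
   then the remaining ones in the generators [y] it produces. *)
Lemma flat_system n (I : finType) (E : 'I_n -> I -> S) (u : I -> S) :
  (forall e i, A (E e i)) -> (forall i, C (u i)) ->
  (forall e, \sum_i E e i * u i = 0) ->
  exists K (c : I -> 'I_K -> S) (b : 'I_K -> S),
  [/\ forall i k, A (c i k), forall k, C (b k), forall i, u i = \sum_k c i k * b k
    & forall e k, \sum_i E e i * c i k = 0].
Proof.
elim: n I E u => [|n IHn] I E u hE hu hEu.
  exists #|I|, (fun i k => (enum_rank i == k)%:R), (fun k => u (enum_val k)).
  split=> [i k|k|i|[]//]; [exact: subring_bool | exact: hu |].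
  rewrite (bigD1 (enum_rank i)) //= eqxx mul1r enum_rankK big1 ?addr0 // => k hk.
  by rewrite eq_sym (negbTE hk) mul0r.
pose E0 i := E ord0 i.
have [j|j||m [y [c0 [hy hc0 hu0 hE0]]]] :=
    @HAC_flat #|I| (fun j => E0 (enum_val j)) (fun j => u (enum_val j)).
- exact: hE.
- exact: hu.
- by rewrite -(big_enum_val (A := predT) (fun i => E0 i * u i)); exact: hEu.
pose c1 i k := c0 (enum_rank i) k.
have hu1 i : u i = \sum_k c1 i k * y k by rewrite -[in LHS](enum_rankK i); exact: hu0.
have hE1 k : \sum_i E0 i * c1 i k = 0.
  rewrite (big_enum_val (A := predT)) -[RHS](hE0 k); apply: eq_bigr => j _.
  by rewrite /c1 enum_valK.
have [||| K [c2 [b [hc2 hb hy2 hE2]]]] :=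
    IHn 'I_m (fun e k => \sum_i E (lift ord0 e) i * c1 i k) y.
- by move=> e k; apply: subring_sum => // i _; apply: subringM => //; exact: hc0.
- exact: hy.
- move=> e; rewrite -[RHS](hEu (lift ord0 e)) -sum_mul_sumA.
  by apply: eq_bigr => i _; rewrite -hu1.
exists K, (fun i k => \sum_l c1 i l * c2 l k), b; split => //.
- move=> i k; apply: subring_sum => // l _; apply: subringM => //; exact: hc0.
- by move=> i; rewrite hu1 -sum_mul_sumA; apply: eq_bigr => l _; rewrite -hy2.
move=> e k; rewrite (sum_mul_sumA (E e) c1 (c2^~ k)).
have [e' ->|->] := unliftP ord0 e; first exact: hE2.
by rewrite big1 // => l _; rewrite hE1 mul0r.
Qed.

End FlatSystem.

Section Adjoin.
Variable S : comNzRingType.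
Implicit Types (A : S -> Prop) (P Q : {poly S}).

Definition coefs_in A P := forall i, A P`_i.

Variable R : S -> Prop.
Hypothesis HR : is_subring R.

Lemma coefs_inC c : R c -> coefs_in R c%:P.
Proof.
by move=> hc i; rewrite coefC; case: eqP => _; [exact: hc | exact: subring0].
Qed.
Lemma coefs_in1 : coefs_in R 1.
Proof. by move=> i; rewrite coef1; exact: subring_bool. Qed.
Lemma coefs_inX : coefs_in R 'X.
Proof. by move=> i; rewrite coefX; exact: subring_bool. Qed.
Lemma coefs_inB P Q : coefs_in R P -> coefs_in R Q -> coefs_in R (P - Q).
Proof. by move=> hP hQ i; rewrite coefB; exact: subringB. Qed.
Lemma coefs_inD P Q : coefs_in R P -> coefs_in R Q -> coefs_in R (P + Q).
Proof. by move=> hP hQ i; rewrite coefD; exact: subringD. Qed.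
Lemma coefs_inM P Q : coefs_in R P -> coefs_in R Q -> coefs_in R (P * Q).
Proof.
by move=> hP hQ i; rewrite coefM; apply: subring_sum => // j _; exact: subringM.
Qed.

Definition adjoin (x : S) : S -> Prop := fun s => exists2 P, coefs_in R P & s = P.[x].

Lemma adjoin_subring x : is_subring (adjoin x).
Proof.
split.
- by exists 0; rewrite ?horner0 // => i; rewrite coef0; exact: subring0.
- by exists 1; rewrite ?hornerC //; exact: coefs_in1.
- move=> _ _ [P hP ->] [Q hQ ->]; exists (P - Q); first exact: coefs_inB.
  by rewrite hornerD hornerN.
- move=> _ _ [P hP ->] [Q hQ ->].
  by exists (P + Q); rewrite ?hornerD //; exact: coefs_inD.
- move=> _ _ [P hP ->] [Q hQ ->].
  by exists (P * Q); rewrite ?hornerM //; exact: coefs_inM.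
Qed.

Lemma sub_adjoin x : Defs.subset R (adjoin x).
Proof. by move=> r hr; exists r%:P; rewrite ?hornerC //; exact: coefs_inC. Qed.

Lemma adjoin_gen x : adjoin x x.
Proof. by exists 'X; rewrite ?hornerX //; exact: coefs_inX. Qed.

Lemma adjoin_min x T : is_subring T -> Defs.subset R T -> T x ->
  Defs.subset (adjoin x) T.
Proof.
move=> hT RT hx _ [P hP ->]; rewrite horner_coef.
apply: subring_sum => // i _.
by apply: subringM => //; [exact: RT | exact: subring_exp].
Qed.

End Adjoin.

Section FlatPolyRelation.
Variable S : comNzRingType.
Variables A C : S -> Prop.
Hypothesis HA : is_subring A.
Hypothesis HAC_flat : is_flat A C.

Lemma flat_poly_relation (I : finType) (P : I -> {poly S}) (u : I -> S) :
  (forall i, coefs_in A (P i)) -> (forall i, C (u i)) -> \sum_i u i *: P i = 0 ->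
  exists K (c : I -> 'I_K -> S) (b : 'I_K -> S),
  [/\ forall i k, A (c i k), forall k, C (b k), forall i, u i = \sum_k c i k * b k
    & forall k, \sum_i c i k *: P i = 0].
Proof.
move=> hP hu hPu; pose N := (\max_i size (P i))%N.
have [e i|//|e|K [c [b [hc hb hcb hE]]]] :=
    @flat_system _ _ _ HA HAC_flat N I (fun e i => (P i)`_e) u.
- exact: hP.
- transitivity (\sum_i u i *: P i)`_e; last by rewrite hPu coef0.
  by rewrite coef_sum; apply: eq_bigr => i _; rewrite coefZ mulrC.
exists K, c, b; split => // k; apply/polyP => e; rewrite coef0 coef_sum.
have [eN|Ne] := ltnP e N.
  by rewrite -[RHS](hE (Ordinal eN) k); apply: eq_bigr => i _; rewrite coefZ mulrC.
rewrite big1 // => i _; rewrite coefZ nth_default ?mulr0 //.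
exact: leq_trans (leq_bigmax i) Ne.
Qed.

End FlatPolyRelation.

Section EpiKernel.
Variable S : comNzRingType.
Variable R : S -> Prop.
Hypothesis HR : is_subring R.
Variable x : S.
Local Notation B := (adjoin R x).

Definition adjoin_pred : pred S := fun s => `[< B s >].

Lemma adjoin_pred_subring_closed : subring_closed adjoin_pred.
Proof.
have hB := adjoin_subring HR x.
split=> [|a b /asboolP ha /asboolP hb|a b /asboolP ha /asboolP hb]; apply/asboolP.
- exact: subring1 hB.
- exact: subringB.
- exact: subringM.
Qed.

(* [R[x]] as a ring in its own right, so that we can form [R[x][X]]. *)
HB.instance Definition _ :=
  GRing.isSubringClosed.Build S adjoin_pred adjoin_pred_subring_closed.
Definition adjoin_type := {s : S | adjoin_pred s}.
HB.instance Definition _ := [isSub of adjoin_type for @proj1_sig S adjoin_pred].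
HB.instance Definition _ := [Choice of adjoin_type by <:].
HB.instance Definition _ := [SubChoice_isSubComNzRing of adjoin_type by <:].
Local Notation Bt := adjoin_type.

Lemma val_insubd_adjoin s : B s -> val (insubd (0 : Bt) s) = s.
Proof. by move=> hs; rewrite val_insubd /adjoin_pred asboolT. Qed.

Definition lift_poly (P : {poly S}) : {poly Bt} := map_poly (insubd (0 : Bt)) P.

Lemma lift_polyK P : coefs_in R P -> map_poly val (lift_poly P) = P.
Proof.
move=> hP; apply/polyP => i; rewrite coef_map /lift_poly coef_map_id0 /=.
  by rewrite val_insubd_adjoin //; exact: sub_adjoin (hP i).
apply: val_inj; rewrite val_insubd_adjoin //.
exact: subring0 (adjoin_subring HR x).
Qed.

Lemma map_val_inj : injective (map_poly (val : Bt -> S)).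
Proof. by apply: map_inj_poly; [exact: val_inj | rewrite rmorph0]. Qed.

(* Rewriting with [rmorphB] etc. directly would leave [map_poly val] in its
   canonical-structure form, which [lift_polyK] no longer matches. *)
Lemma map_valB p q :
  map_poly (val : Bt -> S) (p - q) = map_poly val p - map_poly val q.
Proof. exact: rmorphB. Qed.
Lemma map_valD p q :
  map_poly (val : Bt -> S) (p + q) = map_poly val p + map_poly val q.
Proof. exact: rmorphD. Qed.
Lemma map_valM p q :
  map_poly (val : Bt -> S) (p * q) = map_poly val p * map_poly val q.
Proof. exact: rmorphM. Qed.
Lemma map_val_sum (J : Type) (r : seq J) (F : J -> {poly Bt}) :
  map_poly (val : Bt -> S) (\sum_(j <- r) F j) = \sum_(j <- r) map_poly val (F j).
Proof. exact: rmorph_sum. Qed.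

Lemma lift_polyD P Q : coefs_in R P -> coefs_in R Q ->
  lift_poly (P + Q) = lift_poly P + lift_poly Q.
Proof.
move=> hP hQ; apply: map_val_inj.
by rewrite map_valD !lift_polyK //; apply: coefs_inD.
Qed.

Lemma lift_polyM P Q : coefs_in R P -> coefs_in R Q ->
  lift_poly (P * Q) = lift_poly P * lift_poly Q.
Proof.
move=> hP hQ; apply: map_val_inj.
by rewrite map_valM !lift_polyK //; apply: coefs_inM.
Qed.

Lemma lift_poly1 : lift_poly 1 = 1.
Proof.
by apply: map_val_inj; rewrite lift_polyK ?rmorph1 //; exact: coefs_in1 HR.
Qed.

Lemma lift_polyX : lift_poly 'X = 'X.
Proof.
by apply: map_val_inj; rewrite map_polyX lift_polyK //; exact: coefs_inX HR.
Qed.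

Lemma lift_polyC r : R r -> lift_poly r%:P = (insubd (0 : Bt) r)%:P.
Proof.
move=> hr; apply: map_val_inj; rewrite map_polyC lift_polyK; last exact: coefs_inC.
by rewrite /= val_insubd_adjoin //; exact: sub_adjoin.
Qed.

(* [vanishing q] says [q ∈ K := ker (R[X] -> R[x])], and [kernel_ideal] is the
   extended ideal [K R[x][X]]. *)
Definition vanishing (q : {poly Bt}) :=
  coefs_in R (map_poly val q) /\ (map_poly val q).[x] = 0.

Definition kernel_ideal (P : {poly Bt}) := exists s : seq (Bt * {poly Bt}),
  (forall hq, hq \in s -> vanishing hq.2) /\ P = \sum_(hq <- s) hq.1%:P * hq.2.

Lemma vanishing_lift_polyB P Q : coefs_in R P -> coefs_in R Q -> P.[x] = Q.[x] ->
  vanishing (lift_poly P - lift_poly Q).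
Proof.
move=> hP hQ hPQ; rewrite /vanishing map_valB !lift_polyK //.
by split; [exact: coefs_inB | rewrite hornerD hornerN hPQ subrr].
Qed.

Lemma vanishing_mulXn n q : vanishing q -> vanishing ('X^n * q).
Proof.
move=> [hq hqx]; rewrite /vanishing map_valM map_polyXn.
split; last by rewrite hornerM hornerXn hqx mulr0.
by move=> i; rewrite coefXnM; case: ltnP => _ //; exact: subring0.
Qed.

Lemma kernel_ideal_vanishing q : vanishing q -> kernel_ideal q.
Proof.
move=> hq; exists [:: (1, q)]; split; first by move=> hq'; rewrite inE => /eqP ->.
by rewrite big_seq1 mul1r.
Qed.

Lemma kernel_ideal0 : kernel_ideal 0.
Proof. by exists [::]; rewrite big_nil. Qed.

Lemma kernel_idealD P Q : kernel_ideal P -> kernel_ideal Q -> kernel_ideal (P + Q).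
Proof.
move=> [s [hs ->]] [t [ht ->]]; exists (s ++ t); split; last by rewrite big_cat.
by move=> hq; rewrite mem_cat => /orP[/hs|/ht].
Qed.

Lemma kernel_idealMl a P : kernel_ideal P -> kernel_ideal (a * P).
Proof.
move=> [s [hs ->]].
exists [seq (a`_i * hq.1, 'X^i * hq.2) | i <- index_iota 0 (size a), hq <- s]; split.
  by move=> _ /allpairsP[[i hq] [_ /hs hq2 ->]]; exact: vanishing_mulXn.
rewrite big_allpairs_dep /= big_mkord -{1}[a]coefK poly_def mulr_suml.
apply: eq_bigr => i _; rewrite mulr_sumr; apply: eq_bigr => hq _.
by rewrite polyCM -mul_polyC; ring.
Qed.

Section Tensor.
Local Open Scope quotient_scope.
Hypothesis kernel_ideal_proper : ~ kernel_ideal 1.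

Definition kernel_pred : {pred {poly Bt}} := fun P => `[< kernel_ideal P >].

Lemma kernel_pred_idealr_closed : idealr_closed kernel_pred.
Proof.
split; first by apply/asboolP; exact: kernel_ideal0.
  by apply/negP => /asboolP.
move=> a P Q /asboolP hP /asboolP hQ; apply/asboolP.
exact: kernel_idealD (kernel_idealMl a hP) hQ.
Qed.

HB.instance Definition _ :=
  isIdealr.Build {poly Bt} kernel_pred kernel_pred_idealr_closed.

(* [R[x] ⊗_R R[x] = R[x][X] / K R[x][X]]; [tensor_inl] and [tensor_inr] are
   [b ↦ b ⊗ 1] and [b ↦ 1 ⊗ b]. *)
Definition adjoin_tensor := {ideal_quot kernel_pred}.

Definition adjoin_repr (s : S) : {poly S} :=
  if pselect (B s) is left hs then s2val (cid2 hs) else 0.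

Lemma adjoin_reprP s : B s -> coefs_in R (adjoin_repr s) /\ s = (adjoin_repr s).[x].
Proof. by rewrite /adjoin_repr; case: pselect => // hs _; case: (cid2 hs). Qed.

Definition tensor_inl (s : S) : adjoin_tensor :=
  \pi_adjoin_tensor ((insubd (0 : Bt) s)%:P).
Definition tensor_inr (s : S) : adjoin_tensor :=
  \pi_adjoin_tensor (lift_poly (adjoin_repr s)).

Lemma tensor_inr_horner P : coefs_in R P ->
  tensor_inr P.[x] = \pi_adjoin_tensor (lift_poly P).
Proof.
move=> hP; have hB : B P.[x] by exists P.
have [hrepr reprE] := adjoin_reprP hB.
apply/eqP; rewrite -Quotient.idealrBE; apply/asboolP.
by apply: kernel_ideal_vanishing; apply: vanishing_lift_polyB; rewrite -?reprE.
Qed.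

Lemma tensor_inl_morph : morph_on B tensor_inl.
Proof.
have insubdD s t : B s -> B t -> insubd (0 : Bt) (s + t) = insubd 0 s + insubd 0 t.
  move=> hs ht; apply: val_inj; rewrite rmorphD /= !val_insubd_adjoin //.
  exact: subringD (adjoin_subring HR x) hs ht.
have insubdM s t : B s -> B t -> insubd (0 : Bt) (s * t) = insubd 0 s * insubd 0 t.
  move=> hs ht; apply: val_inj; rewrite rmorphM /= !val_insubd_adjoin //.
  exact: subringM (adjoin_subring HR x) hs ht.
split.
- rewrite /tensor_inl; have -> : insubd (0 : Bt) 1 = 1.
    apply: val_inj; rewrite val_insubd_adjoin ?rmorph1 //.
    exact: subring1 (adjoin_subring HR x).
  by rewrite rmorph1.
- by move=> s t hs ht; rewrite /tensor_inl insubdD // polyCD rmorphD.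
- by move=> s t hs ht; rewrite /tensor_inl insubdM // polyCM rmorphM.
Qed.

Lemma tensor_inr_morph : morph_on B tensor_inr.
Proof.
split.
- rewrite -[1](hornerC 1 x) tensor_inr_horner ?lift_poly1 ?rmorph1 //.
  exact: coefs_in1.
- move=> _ _ [P hP ->] [Q hQ ->].
  rewrite -hornerD !tensor_inr_horner ?lift_polyD ?rmorphD //; exact: coefs_inD.
- move=> _ _ [P hP ->] [Q hQ ->].
  rewrite -hornerM !tensor_inr_horner ?lift_polyM ?rmorphM //; exact: coefs_inM.
Qed.

Lemma tensor_inl_inr r : R r -> tensor_inl r = tensor_inr r.
Proof.
move=> hr; rewrite -[in RHS](hornerC r x) tensor_inr_horner; last exact: coefs_inC.
by rewrite lift_polyC.
Qed.

Lemma kernel_ideal_X_sub_proper : is_epi R B ->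
  kernel_ideal ('X - (insubd (0 : Bt) x)%:P).
Proof.
move=> Hepi; have := Hepi _ _ _ tensor_inl_morph tensor_inr_morph tensor_inl_inr.
move=> /(_ x (adjoin_gen HR x)).
rewrite -[in tensor_inr x](hornerX x) tensor_inr_horner ?lift_polyX;
  last exact: coefs_inX.
by move/eqP; rewrite eq_sym -Quotient.idealrBE => /asboolP.
Qed.

End Tensor.

(* The quotient ring above needs a proper ideal; otherwise the claim is trivial. *)
Lemma kernel_ideal_X_sub : is_epi R B -> kernel_ideal ('X - (insubd (0 : Bt) x)%:P).
Proof.
move=> Hepi; have [h1|h1] := classic (kernel_ideal 1).
  by rewrite -[_ - _]mulr1; exact: kernel_idealMl.
exact: kernel_ideal_X_sub_proper h1 Hepi.
Qed.

Lemma epi_X_sub_decomposition : is_epi R B ->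
  exists L (h : 'I_L -> S) (q : 'I_L -> {poly S}),
  [/\ forall l, B (h l), forall l, coefs_in R (q l), forall l, (q l).[x] = 0
    & 'X - x%:P = \sum_l h l *: q l].
Proof.
move=> Hepi; have [s [hs sE]] := kernel_ideal_X_sub Hepi.
pose hq l := nth (0, 0) s l.
exists (size s), (fun l => val (hq l).1), (fun l => map_poly val (hq l).2).
have hq_van l : (l < size s)%N -> vanishing (hq l).2.
  by move=> hl; apply: hs; exact: mem_nth.
split.
- by move=> l; apply/asboolP; exact: (valP (hq l).1).
- by move=> l; have [] := hq_van l (ltn_ord l).
- by move=> l; have [] := hq_van l (ltn_ord l).
have := congr1 (map_poly (val : Bt -> S)) sE.
rewrite map_valB map_polyX map_polyC /= val_insubd_adjoin; last exact: adjoin_gen.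
move=> ->; rewrite map_val_sum (big_nth (0, 0)) big_mkord; apply: eq_bigr => l _.
by rewrite map_valM map_polyC mul_polyC.
Qed.

End EpiKernel.

Section Conductor.
Variable S : comNzRingType.
Variable R : S -> Prop.
Hypothesis HR : is_subring R.

(* The conductor [(R :_R x)] generates the unit ideal of [R[x]]. *)
Definition conductor_one (x : S) := exists n (c b : 'I_n -> S),
  (forall k, [/\ R (c k), R (c k * x) & adjoin R x (b k)]) /\
  \sum_(k < n) c k * b k = 1.

(* Flatness turns the relation [X - x = sum_l h_l q_l] of the epimorphism into
   relations [c_1k - c_0k X + sum_l c_lk q_l = 0] over [R]; evaluating them at
   [x] shows [c_0k x = c_1k], while [1 = sum_k c_0k b_k]. *)
Lemma flat_epi_conductor_one x :
  is_flat R (adjoin R x) -> is_epi R (adjoin R x) -> conductor_one x.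
Proof.
move=> Hflat Hepi; have [L [h [q [hB hq hqx hE]]]] := epi_X_sub_decomposition HR Hepi.
pose u (i : bool + 'I_L) :=
  match i with inl true => 1 | inl false => x | inr l => h l end.
pose P (i : bool + 'I_L) : {poly S} :=
  match i with inl true => - 'X | inl false => 1 | inr l => q l end.
have [[[]|l]|[[]|l]||K [c [b [hc hb hu hrel]]]] :=
  flat_poly_relation HR Hflat (P := P) (u := u).
- by move=> i; rewrite /= coefN; apply: subringN => //; exact: coefs_inX.
- exact: coefs_in1.
- exact: hq.
- exact: subring1 (adjoin_subring HR x).
- exact: adjoin_gen.
- exact: hB.
- by rewrite big_sumType big_bool /= -hE scale1r alg_polyC; ring.
exists K, (c (inl true)), b; split; last by rewrite -(hu (inl true)).
move=> k; split; [exact: hc | | exact: hb].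
have := congr1 (horner^~ x) (hrel k).
rewrite big_sumType big_bool /= hornerD horner_sum big1 => [|l _]; last first.
  by rewrite hornerZ hqx mulr0.
rewrite addr0 horner0 !hornerE mulrN addrC => /eqP; rewrite subr_eq0 => /eqP <-.
exact: hc.
Qed.

End Conductor.

Lemma horner_reverse (S : comNzRingType) (Q : {poly S}) x z m :
  x * z = 1 -> (size Q <= m.+1)%N ->
  (\poly_(j < m.+1) Q`_(m - j)).[x] = x ^+ m * Q.[z].
Proof.
move=> hxz hQ; rewrite horner_poly (horner_coef_wide z hQ) mulr_sumr.
rewrite (reindex_inj rev_ord_inj) /=; apply: eq_bigr => i _.
have hi : (i <= m)%N by rewrite -ltnS.
have xz : x ^+ m * z ^+ i = x ^+ (m - i).
  by rewrite -{1}(subnK hi) exprD -mulrA -exprMn hxz expr1n mulr1.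
by rewrite subSS subKn // mulrCA xz.
Qed.

Section LocalConductor.
Variable S : comNzRingType.
Variables R M : S -> Prop.
Hypothesis HR : is_subring R.
Hypothesis HM : is_maximal_ideal R M.
Hypothesis M_unique : forall N, is_maximal_ideal R N -> same_set N M.
Let M_ideal : is_ideal R M := maximal_is_ideal HM.

(* [M R[x] = R[x]] *)
Definition extends_to_one (x : S) := exists2 P, coefs_in M P & P.[x] = 1.

Lemma extends_to_one_shorten (P Q : {poly S}) x z :
  coefs_in M P -> coefs_in M Q -> x * z = 1 -> P.[x] = 1 -> Q.[z] = 1 ->
  (1 < size Q)%N -> (size Q <= size P)%N ->
  exists P', [/\ coefs_in M P', P'.[x] = 1 & (size P' < size P)%N].
Proof.
move=> hP hQ hxz hPx hQz hQ1 hQP.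
have [w hw hQw] := local_unit_one_sub HR HM M_unique (hQ 0%N).
set m := (size Q).-1; set n := (size P).-1.
have sQ : size Q = m.+1 by rewrite prednK // ltnW.
have sP : size P = n.+1 by rewrite prednK // (leq_trans _ hQP) // ltnW.
have hmn : (m <= n)%N by rewrite -ltnS -sQ -sP.
(* [Qr] vanishes at [x] and has leading coefficient [Q_0 - 1], a unit of [R];
   adding a multiple of it kills the leading coefficient of [P]. *)
pose Qr := \poly_(j < m.+1) Q`_(m - j) - 'X^m.
have Qrx : Qr.[x] = 0.
  by rewrite hornerD hornerN (horner_reverse hxz) ?sQ // hQz mulr1 hornerXn subrr.
have QrR j : R Qr`_j.
  rewrite coefB coef_poly coefXn; apply: subringB HR _ (subring_bool _ HR).
  by case: ltnP => _; [exact: ideal_sub M_ideal (hQ _) | exact: subring0].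
exists (P + (P`_n * w) *: ('X^(n - m) * Qr)); split.
- move=> i; rewrite coefD coefZ -mulrA; apply: idealD M_ideal (hP i) _.
  apply: ideal_mulr M_ideal _ (hP n); apply: subringM HR hw _.
  by rewrite coefXnM; case: ltnP => _; [exact: subring0 | exact: QrR].
- by rewrite hornerD hornerZ hornerM Qrx !mulr0 addr0.
rewrite sP ltnS; apply/leq_sizeP => j hj.
rewrite coefD coefZ coefXnM ltnNge (leq_trans (leq_subr _ _) hj) /=.
rewrite coefB coef_poly coefXn.
have [jn|nj|->] := ltngtP j n.
- by move: hj; rewrite leqNgt jn.
- have mj : (m < j - (n - m))%N by rewrite ltn_subRL subnK.
  by rewrite nth_default ?sP // add0r ltnS leqNgt mj /= (gtn_eqF mj) subrr mulr0.
rewrite subKn // ltnSn subnn eqxx.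
have -> : P`_n + P`_n * w * (Q`_0 - 1%:R) = P`_n * (1 - (1 - Q`_0) * w) by ring.
by rewrite hQw subrr mulr0.
Qed.

Lemma extends_to_one_inverse x z :
  x * z = 1 -> extends_to_one x -> ~ extends_to_one z.
Proof.
move=> hxz [P hP hPx] [Q hQ hQz]; have [n] := ubnP (size P + size Q).
elim: n => // n IHn in P Q x z hP hQ hPx hQz hxz *; rewrite ltnS => hn.
wlog hle : P Q x z hP hQ hPx hQz hn hxz / (size Q <= size P)%N.
  move=> W; have [hle|/ltnW hPQ] := leqP (size Q) (size P); first exact: (W P Q x z).
  by apply: (W Q P z x); rewrite // 1?addnC 1?mulrC.
have [hQ1|hQ1] := leqP (size Q) 1.
  by apply: (maximal_not1 HM); move: hQz; rewrite (size1_polyC hQ1) hornerC => <-.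
have [P' [hP' hP'x hsP']] := extends_to_one_shorten hP hQ hxz hPx hQz hQ1 hle.
by apply: (IHn P' Q x z) => //; rewrite (leq_trans _ hn) // ltn_add2r.
Qed.

Lemma extends_to_one_unit x : extends_to_one x -> exists2 z, adjoin R x z & x * z = 1.
Proof.
move=> [P hP hPx]; have [w hw hPw] := local_unit_one_sub HR HM M_unique (hP 0%N).
have PE : P.[x] = P`_0 + (drop_poly 1 P).[x] * x.
  rewrite -{1}(poly_take_drop 1 P) hornerD hornerMX.
  by rewrite (size1_polyC (size_take_poly 1 P)) hornerC coef_take_poly.
have xD : x * (drop_poly 1 P).[x] = 1 - P`_0 by rewrite mulrC -hPx PE addrC addKr.
exists (w * (drop_poly 1 P).[x]); last by rewrite mulrCA xD mulrC.
exists (w *: drop_poly 1 P); last by rewrite hornerZ.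
move=> i; rewrite coefZ coef_drop_poly; apply: subringM HR hw _.
exact: ideal_sub M_ideal (hP _).
Qed.

Lemma conductor_one_dichotomy x : conductor_one R x -> R x \/ extends_to_one x.
Proof.
move=> [n [c [b [hcb hsum]]]].
have [[k hk]|hM] := classic (exists k, ~ M (c k)).
  have [hck hckx _] := hcb k; have [c' hc' hcc'] := local_unit HR M_unique hck hk.
  left; have -> : x = c' * (c k * x) by rewrite mulrA [c' * _]mulrC hcc' mul1r.
  exact: subringM.
right; have /fin_all_exists[P hP] : forall k, exists P, coefs_in R P /\ b k = P.[x].
  by move=> k; have [_ _ [P ? ?]] := hcb k; exists P.
exists (\sum_k c k *: P k).
  move=> i; rewrite coef_sum; apply: (ideal_sum _ M_ideal) => k _; rewrite coefZ.
  apply: ideal_mulr M_ideal ((hP k).1 i) _.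
  by apply: NNPP => hck; apply: hM; exists k.
by rewrite horner_sum -hsum; apply: eq_bigr => k _; rewrite hornerZ -(hP k).2.
Qed.

(* If [y] is not in [R], then [M R[y] = R[y]], so [y] has an inverse [z] in
   [R[y] ⊆ T]; as [M R[y]] and [M R[z]] cannot both be the unit ideal, [z ∈ R]. *)
Lemma Prufer_inv_dichotomy T : is_subring T -> Defs.subset R T -> is_Prufer R T ->
  inv_dichotomy R T.
Proof.
move=> hT RT hPT.
have conductor y : T y -> conductor_one R y.
  move=> hy; have [hflat hepi] :=
    hPT _ (adjoin_subring HR y) (sub_adjoin HR y) (adjoin_min hT RT hy).
  exact: flat_epi_conductor_one.
move=> y hy; have [|hMy] := conductor_one_dichotomy (conductor y hy); first by left.
right; have [z hyz hz] := extends_to_one_unit hMy.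
have [hzR|hMz] := conductor_one_dichotomy (conductor z (adjoin_min hT RT hy hyz)).
  by exists z; rewrite // mulrC.
by case: (extends_to_one_inverse hz hMy hMz).
Qed.

End LocalConductor.

(* [S] with its nontriviality made canonical, so that [{poly S}] is available. *)
Definition nz_copy (S : comPzRingType) of (1 : S) != 0 : Type := S.
HB.instance Definition _ (S : comPzRingType) (S10 : (1 : S) != 0) :=
  GRing.ComPzRing.on (nz_copy S10).
HB.instance Definition _ (S : comPzRingType) (S10 : (1 : S) != 0) :=
  GRing.PzSemiRing_isNonZero.Build (nz_copy S10) S10.

Theorem mainTheorem5 (S : comPzRingType) (R : S -> Prop) :
  is_subring R -> is_local R -> is_flat R (fun _ => True) ->
  is_Prufer_hull R (large_quotient R (strong_divisor R)) /\
  same_set (large_quotient R (strong_divisor R))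
           (localization_in R (fun s => strong_divisor R s /\ unitS s)).
Proof.
move=> HR [M [HM M_unique]] Hflat.
split; last exact: large_quotient_localization.
split.
- exact: large_quotient_subring.
- exact: sub_large_quotient.
- exact: large_quotient_Prufer.
move=> T hT RT hPT; apply: dichotomy_sub_large_quotient => //.
have S10 : (1 : S) != 0 by case: HM => hM hM1 _; exact: proper_ideal_oner_neq0 hM hM1.
exact: (Prufer_inv_dichotomy (S := nz_copy S10) HR HM M_unique hT RT hPT).
Qed.
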